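(* For every integer $m\ge 0$ and all integers $n,k$ with $0\le n,k<3\cdot 2^m$, $$\binom{n+3\cdot 2^m}{k}_F\equiv \binom{n}{k}_F \pmod 2.$$
   Context: The Fibonacci numbers are defined by $F_0=0$, $F_1=1$, $F_n=F_{n-1}+F_{n-2}$ for $n\ge 2$. For $n\ge 0$ let $n!_F=F_1F_2\cdots F_n$ (with $0!_F=1$), and for $0\le k\le n$ define the Fibonomial coefficient $\binom{n}{k}_F=\dfrac{n!_F}{k!_F\,(n-k)!_F}$; by convention $\binom{n}{k}_F=0$ if $k<0$ or $k>n$. *)

From mathcomp Require Import all_boot.
Set Implicit Arguments. Unset Strict Implicit. Unset Printing Implicit Defensive.

Fixpoint fib (n : nat) : nat :=
  match n with
  | 0 => 0
  | 1 => 1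
  | (m.+1 as p).+1 => fib p + fib m
  end.

Definition fibfact (n : nat) : nat := \prod_(1 <= i < n.+1) fib i.

(* Fibonomial coefficient: n!_F / (k!_F (n-k)!_F) for 0 <= k <= n, else 0.
   (The quotient is exact: Fibonomials are integers.) *)
Definition fibonomial (n k : nat) : nat :=
  if k <= n then fibfact n %/ (fibfact k * fibfact (n - k)) else 0.

(* The argument:
   - The Fibonomials satisfy the Pascal-type recurrence
       [n+1, k+1]_F = F_{n-k+1} [n, k]_F + F_k [n, k+1]_F,
     a consequence of the addition formula F_{a+b+1} = F_{a+1}F_{b+1} + F_aF_b;
     we define [fibbin] by this recurrence and show it equals [fibonomial].
   - Since F_i is odd exactly when 3 does not divide i, reducing the
     recurrence mod 2 identifies the parity of [n, k]_F with the explicit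
     predicate [fibpar n k]: writing n = 6a + r and k = 6b + s (r, s < 6),
       [n, k]_F is odd  <->  s <= r,  s mod 3 <= r mod 3,  and C(a, b) is odd.
   - Lucas' theorem mod 2 gives C(a + 2^j, b) = C(a, b) mod 2 for a, b < 2^j.
   For m >= 1 we have 3 * 2^m = 6 * 2^(m-1), so adding 3 * 2^m only shifts the
   quotient a by 2^(m-1), and the theorem follows; m = 0 is a finite check. *)

From mathcomp Require Import all_boot zify.

Lemma euclid_split n {d} : 0 < d -> exists q r, r < d /\ n = q * d + r.
Proof. by move=> d_gt0; exists (n %/ d), (n %% d); rewrite ltn_pmod // -divn_eq. Qed.

Lemma fibSS n : fib n.+2 = fib n.+1 + fib n.
Proof. by []. Qed.

Lemma fibD a b : fib (a + b).+1 = fib a.+1 * fib b.+1 + fib a * fib b.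
Proof.
elim: a b => [|a IHa] b; first by rewrite add0n mul1n mul0n addn0.
by rewrite addSnnS IHa !fibSS; nia.
Qed.

Lemma fib_gt0 i : 0 < fib i.+1.
Proof.
suff [] : 0 < fib i.+1 /\ 0 < fib i.+2 by [].
elim: i => [|i [_ IH2]] //.
by split=> //; rewrite fibSS addn_gt0 IH2.
Qed.

(* F_i is odd exactly when 3 does not divide i (parities repeat 0, 1, 1). *)
Lemma odd_fib i : odd (fib i) = (i %% 3 != 0).
Proof.
suff [] : odd (fib i) = (i %% 3 != 0) /\ odd (fib i.+1) = (i.+1 %% 3 != 0) by [].
elim: i => [|i [IH1 IH2]] //; split=> //.
rewrite fibSS oddD IH1 IH2.
have -> : i.+1 %% 3 = (i %% 3).+1 %% 3 by rewrite -addn1 -modnDml addn1.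
have -> : i.+2 %% 3 = (i %% 3).+2 %% 3 by rewrite -addn2 -modnDml addn2.
by move: (ltn_pmod i (isT : 0 < 3)); case: (i %% 3) => [|[|[|]]].
Qed.

Lemma fibfact0 : fibfact 0 = 1.
Proof. by rewrite /fibfact big_geq. Qed.

Lemma fibfactS n : fibfact n.+1 = fibfact n * fib n.+1.
Proof. by rewrite /fibfact big_nat_recr. Qed.

Lemma fibfact_gt0 n : 0 < fibfact n.
Proof. by elim: n => [|n IH]; rewrite ?fibfact0 // fibfactS muln_gt0 IH fib_gt0. Qed.

Fixpoint fibbin n k :=
  match n, k with
  | _, 0 => 1
  | 0, _.+1 => 0
  | n'.+1, k'.+1 => fib (n' - k').+1 * fibbin n' k' + fib k' * fibbin n' k'.+1
  end.

Lemma fibbinSS n k :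
  fibbin n.+1 k.+1 = fib (n - k).+1 * fibbin n k + fib k * fibbin n k.+1.
Proof. by []. Qed.

Lemma fibbin_small n k : n < k -> fibbin n k = 0.
Proof. by elim: n k => [|n IH] [|k] //= lt_nk; rewrite !IH ?muln0 // ltnW. Qed.

Lemma fibbin_fact n k : k <= n -> fibbin n k * (fibfact k * fibfact (n - k)) = fibfact n.
Proof.
elim: n k => [|n IH] [|k] //; rewrite ?fibfact0 ?mul1n ?muln1 ?subn0 // ltnS => le_kn.
have term_k : fibbin n k * (fibfact k.+1 * fibfact (n - k)) = fib k.+1 * fibfact n.
  by rewrite -(IH k le_kn) fibfactS; nia.
(* For k = n both sides vanish, since [fibbin n n.+1 = 0] and F_0 = 0. *)
have term_kS : fibbin n k.+1 * (fibfact k.+1 * fibfact (n - k)) = fib (n - k) * fibfact n.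
  case: (ltngtP k n) le_kn => [lt_kn _ | // | -> _]; last first.
    by rewrite fibbin_small // subnn.
  have -> : n - k = (n - k.+1).+1 by lia.
  by rewrite -(IH k.+1 lt_kn) (fibfactS (n - k.+1)); nia.
have fibE : fib n.+1 = fib (n - k).+1 * fib k.+1 + fib (n - k) * fib k.
  by rewrite -fibD subnK.
rewrite subSS fibbinSS mulnDl -!mulnA term_k term_kS fibfactS fibE; nia.
Qed.

Lemma fibonomialE n k : fibonomial n k = fibbin n k.
Proof.
rewrite /fibonomial; case: leqP => [le_kn|lt_nk]; last by rewrite fibbin_small.
by rewrite -{1}(@fibbin_fact n k le_kn) mulnK // muln_gt0 !fibfact_gt0.
Qed.

Lemma odd_binSS n k : odd 'C(n.+2, k.+2) = odd 'C(n, k.+2) (+) odd 'C(n, k).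
Proof.
rewrite !binS !oddD.
by case: (odd 'C(n, k)); case: (odd 'C(n, k.+1)); case: (odd 'C(n, k.+2)).
Qed.

Lemma odd_bin_digit a b r s : r < 2 -> s < 2 ->
  odd 'C(a * 2 + r, b * 2 + s) = (s <= r) && odd 'C(a, b).
Proof.
move=> r_lt2 s_lt2; elim: a b => [|a IHa] [|b].
- by case: r s r_lt2 s_lt2 => [|[|]] [|[|]].
- by rewrite bin0n andbF bin_small //; lia.
- rewrite bin0 andbT {IHa}; case: s s_lt2 => [|[|]] // _.
  by rewrite bin1 oddD oddM andbF; case: r r_lt2 => [|[|]].
have -> : a.+1 * 2 + r = (a * 2 + r).+2 by lia.
have -> : b.+1 * 2 + s = (b * 2 + s).+2 by lia.
rewrite odd_binSS; have -> : (b * 2 + s).+2 = b.+1 * 2 + s by lia.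
by rewrite !IHa binS oddD -andb_addr addbC.
Qed.

Lemma odd_bin_shift j a b : a < 2 ^ j -> b < 2 ^ j ->
  odd 'C(a + 2 ^ j, b) = odd 'C(a, b).
Proof.
elim: j a b => [|j IH] a b.
  by rewrite expn0 !ltnS !leqn0 => /eqP-> /eqP->.
have [b' [s [s_lt2 ->]]] := euclid_split b (isT : 0 < 2).
have [a' [r [r_lt2 ->]]] := euclid_split a (isT : 0 < 2).
rewrite expnSr => lt_a lt_b.
have -> : a' * 2 + r + 2 ^ j * 2 = (a' + 2 ^ j) * 2 + r by lia.
by rewrite !odd_bin_digit // IH //; lia.
Qed.

Definition fibpar n k :=
  [&& k %% 6 <= n %% 6, k %% 3 <= n %% 3 & odd 'C(n %/ 6, k %/ 6)].

Lemma modn6_mod3 a c : (a * 6 + c) %% 3 = c %% 3.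
Proof. by rewrite -[6]/(2 * 3) mulnA modnMDl. Qed.

Lemma fibpar_digit a b r s : r < 6 -> s < 6 ->
  fibpar (a * 6 + r) (b * 6 + s) = [&& s <= r, s %% 3 <= r %% 3 & odd 'C(a, b)].
Proof.
move=> r_lt6 s_lt6.
by rewrite /fibpar !modn6_mod3 !modnMDl !divnMDl // !(modn_small (d:=6)) // !(divn_small (d:=6)) // !addn0.
Qed.

Lemma fibpar_small n k : n < k -> fibpar n k = false.
Proof.
have [b [s [s_lt6 ->]]] := euclid_split k (isT : 0 < 6).
have [a [r [r_lt6 ->]]] := euclid_split n (isT : 0 < 6).
move=> lt_nk; rewrite fibpar_digit //.
case: (ltnP a b) => [lt_ab|le_ba]; first by rewrite bin_small // !andbF.
by have -> : (s <= r) = false by apply/negbTE; rewrite -ltnNge; lia.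
Qed.

(* [fibpar] obeys the Fibonomial recurrence reduced mod 2, using [odd_fib]:
   a finite check on the base-6 digits of n and k. *)
Lemma fibpar_rec n k : k <= n ->
  fibpar n.+1 k.+1 =
    (((n - k).+1 %% 3 != 0) && fibpar n k) (+) ((k %% 3 != 0) && fibpar n k.+1).
Proof.
move=> le_kn.
have -> : ((n - k).+1 %% 3 != 0) = (n.+1 %% 3 != k %% 3).
  by apply/idP/idP => /eqP H; apply/eqP; lia.
have [b [s [s_lt6 ->]]] := euclid_split k (isT : 0 < 6).
have [a [r [r_lt6 ->]]] := euclid_split n (isT : 0 < 6).
have carry x : x * 6 + 6 = x.+1 * 6 + 0 by lia.
case: r r_lt6 => [|[|[|[|[|[|r]]]]]] // _; case: s s_lt6 => [|[|[|[|[|[|s]]]]]] // _;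
  rewrite -?addnS ?carry !fibpar_digit // !modn6_mod3 /= ?binS ?oddD;
  by case: (odd 'C(a, b)); case: (odd 'C(a, b.+1)).
Qed.

Lemma odd_fibbin n k : odd (fibbin n k) = fibpar n k.
Proof.
elim: n k => [|n IH] [|k].
- by [].
- by rewrite fibpar_small.
- by rewrite /fibpar !mod0n div0n bin0.
rewrite fibbinSS oddD !oddM !odd_fib !IH.
case: (leqP k n) => [le_kn|lt_nk]; first by rewrite fibpar_rec.
by rewrite !fibpar_small ?andbF //; lia.
Qed.

Theorem mainTheorem1 (m n k : nat) :
  n < 3 * 2 ^ m -> k < 3 * 2 ^ m ->
  fibonomial (n + 3 * 2 ^ m) k = fibonomial n k %[mod 2].
Proof.
rewrite !fibonomialE !modn2 !odd_fibbin.
case: m => [|m].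
  by rewrite expn0 muln1; case: n => [|[|[|n]]] //; case: k => [|[|[|k]]].
have -> : 3 * 2 ^ m.+1 = 2 ^ m * 6 by rewrite expnS; lia.
have [b [s [s_lt6 ->]]] := euclid_split k (isT : 0 < 6).
have [a [r [r_lt6 ->]]] := euclid_split n (isT : 0 < 6).
move=> lt_n lt_k.
have -> : a * 6 + r + 2 ^ m * 6 = (a + 2 ^ m) * 6 + r by lia.
by rewrite !fibpar_digit // odd_bin_shift //; lia.
Qed.
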